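(* Let $q$ be a prime power and let $n,k,r,x$ be integers with $0\le x\le r\le \min(n,k)$. Let $\mathbf{M}$ be a random $n\times k$ matrix over $\mathbb{F}_q$ whose entries are independent and uniformly distributed on $\mathbb{F}_q$, conditioned on the event $\mathrm{rank}(\mathbf{M})=r$. Let $X=\{i\in\{1,\dots,k\}:\mathbf{e}_i\in\mathrm{Row}(\mathbf{M})\}$. Then $$P(|X|=x \mid R=r,\,N=n)=\frac{\binom{k}{x}}{\binom{k}{r}_q}\sum_{j=0}^{k-x}(-1)^j\binom{k-x}{j}\binom{k-x-j}{r-x-j}_q .$$
   Context: $\mathbf{e}_i$ denotes the $i$-th standard unit vector of $\mathbb{F}_q^k$, and $\mathrm{Row}(\mathbf{M})$ is the row space of $\mathbf{M}$. $R$ denotes the rank of $\mathbf{M}$ and $N$ its number of rows. $\binom{m}{d}$ is the ordinary binomial coefficient. $\binom{m}{d}_q$ is the Gaussian binomial coefficient, i.e. the number of $d$-dimensional subspaces of an $m$-dimensional vector space over $\mathbb{F}_q$, $\binom{m}{d}_q=\prod_{i=0}^{d-1}\frac{q^{m}-q^{i}}{q^{d}-q^{i}}$ for $0\le d\le m$. By convention $\binom{m}{d}_q=0$ if $d<0$ or $d>m$. *)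

From HB Require Import structures.
From mathcomp Require Import all_boot all_order all_algebra all_fingroup all_field.
Set Implicit Arguments. Unset Strict Implicit. Unset Printing Implicit Defensive.
Import Order.TTheory GRing.Theory Num.Theory.
Local Open Scope ring_scope.

Definition qbinom (q : nat) (m d : int) : rat :=
  if (0 <= d) && (d <= m) then
    \prod_(i < `|d|%N)
      ((q%:Q ^+ `|m|%N - q%:Q ^+ i) / (q%:Q ^+ `|d|%N - q%:Q ^+ i))
  else 0.

Definition unitRowSet (F : finFieldType) (n k : nat) (M : 'M[F]_(n, k)) : {set 'I_k} :=
  [set i : 'I_k | ((delta_mx 0 i : 'rV[F]_k) <= M)%MS].

Definition probX (F : finFieldType) (n k r x : nat) : rat :=
  (#|[set M : 'M[F]_(n, k) | (\rank M == r) && (#|unitRowSet M| == x)]|%:R)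
  / (#|[set M : 'M[F]_(n, k) | \rank M == r]|%:R).

From HB Require Import structures.
From mathcomp Require Import all_boot all_order all_algebra all_fingroup all_field.
From mathcomp Require Import ring zify.
Import Order.TTheory GRing.Theory Num.Theory.
Local Open Scope ring_scope.
Set Implicit Arguments. Unset Strict Implicit. Unset Printing Implicit Defensive.

(* Double counting the pairs (M, B) with rank M = r and B a linearly independent
   t-tuple of vectors of Row(M) shows that the rank-r matrices whose row space
   contains a given t-dimensional subspace form the fraction
   [k-t choose r-t]_q / [k choose r]_q of all rank-r matrices; the count does not
   depend on the subspace since GL_k acts transitively on independent t-tuples.
   For the span of the e_i, i in T, containment means T is a subset of X(M), so
   inclusion-exclusion in the form
   [|S| = x] = sum_(T subset S) (-1)^(|T|-x) C(|T|, x)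
   together with the substitution |T| = x + j yields the formula. *)

Lemma mul_bin_sub m t x : (x <= t)%N ->
  ('C(m, t) * 'C(t, x) = 'C(m, x) * 'C(m - x, t - x))%N.
Proof.
move=> xt; have [tm | mt] := leqP t m; last first.
  rewrite bin_small // mul0n; have [xm | mx] := leqP x m.
    by rewrite [X in (_ * X)%N]bin_small ?muln0 // ltn_sub2r // (leq_ltn_trans xm).
  by rewrite bin_small.
have fact_pos : (0 < x`! * (t - x)`! * (m - t)`!)%N by rewrite !muln_gt0 !fact_gt0.
apply/eqP; rewrite -(eqn_pmul2r fact_pos); apply/eqP.
have -> : ('C(m, t) * 'C(t, x) * (x`! * (t - x)`! * (m - t)`!) =
          'C(m, t) * ('C(t, x) * (x`! * (t - x)`!)) * (m - t)`!)%N by ring.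
have -> : ('C(m, x) * 'C(m - x, t - x) * (x`! * (t - x)`! * (m - t)`!) =
          'C(m, x) * x`! * ('C(m - x, t - x) * ((t - x)`! * (m - x - (t - x))`!)))%N.
  have -> : (m - x - (t - x) = m - t)%N by lia.
  by ring.
rewrite bin_fact // -mulnA bin_fact // (bin_fact (leq_sub2r x tm)) -mulnA.
by rewrite bin_fact // (leq_trans xt).
Qed.

Section BinomialSums.
Variable R : comPzRingType.

Lemma sum_alternating_bin n :
  \sum_(j < n.+1) (-1) ^+ j * 'C(n, j)%:R = (n == 0)%:R :> R.
Proof.
have := exprBn (1 : R) 1 n; rewrite subrr expr0n => ->.
by apply: eq_bigr => j _; rewrite !expr1n !mulr1 mulr_natr.
Qed.

Lemma sum_bin_mul_bin m x (f : nat -> R) :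
  \sum_(t < m.+1) 'C(m, t)%:R * ((-1) ^+ (t - x) * 'C(t, x)%:R) * f t =
  'C(m, x)%:R * \sum_(j < (m - x).+1) (-1) ^+ j * 'C(m - x, j)%:R * f (x + j)%N.
Proof.
have [xm | mx] := leqP x m; last first.
  rewrite bin_small // mul0r big1 // => t _.
  by rewrite (@bin_small t x) ?mulr0 ?mul0r // (leq_ltn_trans (ltnSE (ltn_ord t)) mx).
rewrite -(big_mkord xpredT (fun t => 'C(m, t)%:R * ((-1) ^+ (t - x) * 'C(t, x)%:R) * f t)).
rewrite (@big_cat_nat _ _ _ x 0 m.+1) ?(leq_trans xm) //= big_nat big1 ?add0r; last first.
  by move=> t /andP[_ tx]; rewrite (bin_small tx) !mulr0 mul0r.
rewrite -{1}(add0n x) big_addn subSn // big_mkord big_distrr /=.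
apply: eq_bigr => j _; rewrite addnK addnC.
have binE : 'C(m, x + j)%:R * 'C(x + j, x)%:R = 'C(m, x)%:R * 'C(m - x, j)%:R :> R.
  by rewrite -!natrM mul_bin_sub ?leq_addr // addKn.
transitivity ('C(m, x + j)%:R * 'C(x + j, x)%:R * ((-1) ^+ j * f (x + j)%N)); first by ring.
by rewrite binE; ring.
Qed.

Lemma sum_subset_card (T : finType) (S : {set T}) (f : nat -> R) :
  \sum_(A : {set T} | A \subset S) f #|A| = \sum_(t < #|S|.+1) 'C(#|S|, t)%:R * f t.
Proof.
have cardA (A : {set T}) : A \subset S -> (#|A| < #|S|.+1)%N.
  by move=> sAS; rewrite ltnS; exact: subset_leq_card.
rewrite (partition_big (fun A : {set T} => inord #|A| : 'I_#|S|.+1) xpredT) //=.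
apply: eq_bigr => t _.
rewrite (eq_bigl (fun A => A \in [set A : {set T} | A \subset S & #|A| == t])); last first.
  move=> A; rewrite !inE; case sAS: (A \subset S) => //=.
  apply/eqP/eqP => [<- | At]; first by rewrite inordK ?cardA.
  by apply: val_inj; rewrite /= inordK ?cardA.
rewrite (eq_bigr (fun=> f t)); last by move=> A; rewrite inE => /andP[_ /eqP ->].
by rewrite sumr_const cards_draws mulr_natl.
Qed.

Lemma sum_subset_signed_bin (T : finType) (S : {set T}) x :
  \sum_(A : {set T} | A \subset S) (-1) ^+ (#|A| - x) * 'C(#|A|, x)%:R = (#|S| == x)%:R :> R.
Proof.
rewrite (sum_subset_card S (fun t => (-1) ^+ (t - x) * 'C(t, x)%:R)).
transitivity (\sum_(t < #|S|.+1)
    'C(#|S|, t)%:R * ((-1) ^+ (t - x) * 'C(t, x)%:R) * (fun=> 1 : R) t).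
  by apply: eq_bigr => t _; rewrite mulr1.
rewrite (sum_bin_mul_bin #|S| x (fun=> 1)); under eq_bigr do rewrite mulr1.
rewrite sum_alternating_bin subn_eq0; have [xS | Sx] := leqP x #|S|.
  rewrite eqn_leq xS andbT; case: leqP => [Sx | _]; last by rewrite mulr0.
  have -> : #|S| = x by apply/eqP; rewrite eqn_leq Sx xS.
  by rewrite binn mulr1 mulr1n.
by rewrite bin_small // mul0r ltn_eqF.
Qed.

End BinomialSums.

Section GaussianBinomial.
Variable q : nat.
Hypothesis q_gt1 : (1 < q)%N.

(* The number of linearly independent d-tuples in F_q^a. *)
Definition qfalling (a d : nat) : rat := \prod_(i < d) (q%:Q ^+ a - q%:Q ^+ i).

Lemma qfalling_small a d : (a < d)%N -> qfalling a d = 0.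
Proof. by move=> ad; rewrite /qfalling (bigD1 (Ordinal ad)) // subrr /= mul0r. Qed.

(* Truncated subtraction is harmless: for a < d both products contain the factor
   q^a - q^a = 0. *)
Lemma natr_qfalling a d : ((\prod_(i < d) (q ^ a - q ^ i))%N)%:R = qfalling a d.
Proof.
have [da | ad] := leqP d a; last first.
  by rewrite qfalling_small // (bigD1 (Ordinal ad)) // subnn /= mul0n.
rewrite natr_prod; apply: eq_bigr => i _; rewrite natrB ?natrX //.
by rewrite leq_pexp2l ?(ltnW q_gt1) // ltnW // (leq_trans _ da).
Qed.

Lemma qfalling_neq0 a d : (d <= a)%N -> qfalling a d != 0.
Proof.
move=> da; rewrite -natr_qfalling pnatr_eq0 -lt0n prodn_gt0 // => i.
by rewrite subn_gt0 ltn_exp2l // (leq_trans _ da).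
Qed.

Lemma qfalling_split a t s : (t <= a)%N ->
  qfalling a (t + s) = qfalling a t * (q%:Q ^+ t) ^+ s * qfalling (a - t) s.
Proof.
move=> ta; rewrite /qfalling big_split_ord /= -mulrA; congr (_ * _).
rewrite -[X in (_ ^+ t) ^+ X](card_ord s) -prodr_const -big_split /=.
by apply: eq_bigr => i _; rewrite mulrBr -!exprD subnKC.
Qed.

Lemma qbinomE m d : (d <= m)%N -> qbinom q m d = qfalling m d / qfalling d d.
Proof. by move=> dm; rewrite /qbinom lez_nat dm /= prodf_div. Qed.

Lemma qfalling_ratio k r t : (t <= k)%N -> (r <= k)%N ->
  qfalling r t / qfalling k t = qbinom q (k - t)%:Z (r%:Z - t%:Z) / qbinom q k r.
Proof.
move=> tk rk; have [rt | tr] := ltnP r t.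
  rewrite qfalling_small // mul0r {1}/qbinom ifF ?mul0r //.
  by rewrite subr_ge0 lez_nat leqNgt rt.
have q_t_neq0 : q%:Q ^+ t != 0 by rewrite expf_neq0 // pnatr_eq0 -lt0n ltnW.
have split_r := @qfalling_split r t (r - t)%N tr.
have split_k := @qfalling_split k t (r - t)%N tk.
rewrite subnKC // in split_r split_k.
rewrite subzn // !qbinomE ?leq_sub2r // split_r split_k.
by field; rewrite expf_neq0 // !qfalling_neq0 ?leq_sub2r.
Qed.

End GaussianBinomial.

Section RowSpaceCounting.
Variables (F : finFieldType) (k : nat).
Local Notation q := #|F|.

Lemma card_submx_rV m (U : 'M[F]_(m, k)) :
  #|[set u : 'rV[F]_k | (u <= U)%MS]| = (q ^ \rank U)%N.
Proof.
have -> : [set u : 'rV[F]_k | (u <= U)%MS] = [set w *m row_base U | w : 'rV_(\rank U)].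
  apply/setP => u; rewrite inE -(eq_row_base U).
  by apply/submxP/imsetP => [[w ->] | [w _ ->]]; exists w.
by rewrite card_imset ?card_mx ?mul1n //; exact/row_free_inj/row_base_free.
Qed.

Lemma row_free_col_mx t (u : 'rV[F]_k) (B : 'M[F]_(t, k)) :
  row_free B -> row_free (col_mx u B) = ~~ (u <= B)%MS.
Proof.
move=> /eqP rB; rewrite /row_free -addsmxE.
have le_rank : (\rank (u + B)%MS <= t.+1)%N by rewrite addsmxE rank_leq_row.
have [ge_rank eq_rank] := mxrank_leqif_sup (addsmxSr u B).
have -> : (u <= B)%MS = (\rank B == \rank (u + B)%MS).
  by rewrite eq_rank addsmx_sub submx_refl andbT.
rewrite rB in ge_rank *; lia.
Qed.

Lemma row_free_dsubmx t (B : 'M[F]_(1 + t, k)) : row_free B -> row_free (dsubmx B).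
Proof.
rewrite -{1}(vsubmxK B) /row_free -addsmxE => /eqP rB.
have := leq_of_leqif (mxrank_adds_leqif (usubmx B) (dsubmx B)); rewrite rB.
have := rank_leq_row (usubmx B); have := rank_leq_row (dsubmx B).
lia.
Qed.

Lemma card_row_free_submx t m (U : 'M[F]_(m, k)) :
  #|[set B : 'M[F]_(t, k) | row_free B && (B <= U)%MS]| =
  (\prod_(i < t) (q ^ \rank U - q ^ i))%N.
Proof.
elim: t => [|t IH].
  rewrite big_ord0 (_ : [set B | _] = setT) ?cardsT ?card_mx ?mul0n //.
  by apply/setP => B; rewrite !inE flatmx0 /row_free mxrank0 sub0mx.
rewrite big_ord_recr /= -IH -sum_nat_const -sum1_card.
pose free_in (d : 'M[F]_(t, k)) := row_free d && (d <= U)%MS.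
rewrite (partition_big (@dsubmx F 1 t k) free_in) => [|B]; last first.
  rewrite inE => /andP[/row_free_dsubmx free_dB sBU]; rewrite /free_in free_dB.
  move: sBU; rewrite -{1}(@vsubmxK F 1 t k B) (col_mx_sub (usubmx B)).
  by case/andP.
apply: eq_big => [d | d /andP[free_d sdU]]; first by rewrite inE.
rewrite (reindex (col_mx^~ d)) /=; last first.
  exists usubmx => [u _ | B]; first by rewrite col_mxKu.
  by case/andP => _ /eqP <-; rewrite vsubmxK.
transitivity #|[set u : 'rV[F]_k | (u <= U)%MS] :\: [set u | (u <= d)%MS]|.
  rewrite -sum1_card; apply: eq_bigl => u.
  by rewrite !inE col_mxKd eqxx row_free_col_mx // (col_mx_sub u d) sdU !andbT.
rewrite cardsD (setIidPr _) ?card_submx_rV ?(eqP free_d) //.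
by apply/subsetP => u; rewrite !inE => /submx_trans->.
Qed.

Definition supmx_of_rank n r t (B : 'M[F]_(t, k)) :=
  [set M : 'M[F]_(n, k) | (\rank M == r) && (B <= M)%MS].

Lemma submx_pid_row_ebase t m (B : 'M[F]_(t, k)) (M : 'M[F]_(m, k)) :
  row_free B -> (B <= M)%MS = ((pid_mx t : 'M_(t, k)) *m row_ebase B <= M)%MS.
Proof. by move=> /eqP rB; rewrite -(eq_row_base B) /row_base rB. Qed.

(* M |-> M P, with P invertible carrying the row space of B onto that of C, is
   a rank-preserving bijection between the two sets. *)
Lemma card_supmx_of_rank_row_free n r t (B C : 'M[F]_(t, k)) :
  row_free B -> row_free C -> #|supmx_of_rank n r B| = #|supmx_of_rank n r C|.
Proof.
move=> free_B free_C; pose P := invmx (row_ebase B) *m row_ebase C.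
have unit_P : P \in unitmx by rewrite unitmx_mul unitmx_inv !row_ebase_unit.
have free_P : row_free P by rewrite row_free_unit.
rewrite -[RHS](card_preimset _ (row_free_inj free_P)); apply: eq_card => M.
rewrite !inE mxrankMfree // (submx_pid_row_ebase _ free_B) (submx_pid_row_ebase _ free_C).
rewrite (_ : _ *m row_ebase C = (pid_mx t : 'M_(t, k)) *m row_ebase B *m P) ?submxMfree //.
by rewrite /P mulmxA mulmxK ?row_ebase_unit.
Qed.

Lemma card_row_free t :
  #|[set B : 'M[F]_(t, k) | row_free B]| = (\prod_(i < t) (q ^ k - q ^ i))%N.
Proof.
rewrite -[in RHS](mxrank1 F k) -(card_row_free_submx t 1%:M).
by apply: eq_card => B; rewrite !inE submx1; case: row_free.
Qed.

Lemma card_supmx_of_rank n r t (B : 'M[F]_(t, k)) : row_free B ->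
  (#|supmx_of_rank n r B| * \prod_(i < t) (q ^ k - q ^ i))%N =
  (#|[set M : 'M[F]_(n, k) | \rank M == r]| * \prod_(i < t) (q ^ r - q ^ i))%N.
Proof.
move=> free_B.
pose incid (M : 'M[F]_(n, k)) (C : 'M[F]_(t, k)) :=
  [&& \rank M == r, row_free C & (C <= M)%MS].
have by_rows : (\sum_M \sum_(C | incid M C) 1 =
    #|[set M : 'M[F]_(n, k) | \rank M == r]| * \prod_(i < t) (q ^ r - q ^ i))%N.
  rewrite (bigID (fun M => \rank M == r)) /= [X in (_ + X)%N]big1 ?addn0
    => [|M /negbTE rM]; last first.
    by rewrite big_pred0 // => C; rewrite /incid rM.
  rewrite -sum_nat_const; apply: eq_big => [M | M /eqP rM]; first by rewrite inE.
  rewrite sum1dep_card -rM -card_row_free_submx; apply: eq_card => C.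
  by rewrite !inE /incid rM eqxx.
have by_cols : (\sum_M \sum_(C | incid M C) 1 =
    \prod_(i < t) (q ^ k - q ^ i) * #|supmx_of_rank n r B|)%N.
  rewrite (exchange_big_dep (fun C : 'M_(t, k) => row_free C)) => [|M C _ /and3P[]//].
  rewrite -card_row_free -sum_nat_const /=.
  apply: eq_big => [C | C free_C]; first by rewrite inE.
  rewrite sum1dep_card (card_supmx_of_rank_row_free n r free_B free_C).
  by apply: eq_card => M; rewrite !inE /incid free_C.
by rewrite mulnC -by_cols by_rows.
Qed.

Lemma row_free_rowsub1 m (f : 'I_m -> 'I_k) :
  injective f -> row_free (rowsub f (1%:M : 'M[F]_k)).
Proof.
move=> f_inj; apply/row_freeP; exists (rowsub f 1%:M)^T; apply/matrixP => i j.
rewrite !mxE (bigD1 (f i)) //= big1 => [|l /negbTE nl]; last by rewrite !mxE eq_sym nl mul0r.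
by rewrite !mxE eqxx mul1r addr0 (inj_eq f_inj) eq_sym.
Qed.

Definition coord_mx (T : {set 'I_k}) : 'M[F]_(#|T|, k) :=
  rowsub (fun i : 'I_#|T| => enum_val i) 1%:M.

Lemma row_free_coord_mx T : row_free (coord_mx T).
Proof. by apply: row_free_rowsub1 => i j /enum_val_inj. Qed.

Lemma coord_mx_sub n T (M : 'M[F]_(n, k)) :
  (coord_mx T <= M)%MS = (T \subset unitRowSet M).
Proof.
apply/row_subP/subsetP => [sTM i iT | sTM i]; last first.
  by rewrite row_rowsub row1; have := sTM _ (enum_valP i); rewrite inE.
by have := sTM (enum_rank_in iT i); rewrite row_rowsub row1 enum_rankK_in // inE.
Qed.

Lemma card_supmx_of_rank_ratio n r t (B : 'M[F]_(t, k)) :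
  row_free B -> (r <= minn n k)%N ->
  #|supmx_of_rank n r B|%:R / #|[set M : 'M[F]_(n, k) | \rank M == r]|%:R =
  qbinom q (k - t)%:Z (r%:Z - t%:Z) / qbinom q k r.
Proof.
move=> free_B; rewrite leq_min => /andP[rn rk].
have q_gt1 : (1 < q)%N := card_finNzRing_gt1 F.
have tk : (t <= k)%N by rewrite -(eqP free_B) rank_leq_col.
have rank_r_gt0 : (0 < #|[set M : 'M[F]_(n, k) | \rank M == r]|)%N.
  by apply/card_gt0P; exists (pid_mx r); rewrite inE rank_pid_mx.
rewrite -qfalling_ratio //; apply/eqP.
rewrite eqr_div ?qfalling_neq0 ?pnatr_eq0 -?lt0n // -!natr_qfalling // -!natrM.
by rewrite card_supmx_of_rank // mulnC.
Qed.

Lemma card_rank_unitRowSet n r x :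
  #|[set M : 'M[F]_(n, k) | (\rank M == r) && (#|unitRowSet M| == x)]|%:R =
  \sum_(T : {set 'I_k})
    (-1) ^+ (#|T| - x) * 'C(#|T|, x)%:R * #|supmx_of_rank n r (coord_mx T)|%:R :> rat.
Proof.
rewrite -sum1dep_card natr_sum big_mkcondr /=.
transitivity (\sum_(M : 'M[F]_(n, k) | \rank M == r)
  \sum_(T : {set 'I_k} | T \subset unitRowSet M) (-1) ^+ (#|T| - x) * 'C(#|T|, x)%:R : rat).
  by apply: eq_bigr => M _; rewrite sum_subset_signed_bin; case: eqP.
rewrite (exchange_big_dep xpredT) //=; apply: eq_bigr => T _.
rewrite (eq_bigl (fun M => M \in supmx_of_rank n r (coord_mx T))) ?sumr_const ?mulr_natr //.
by move=> M; rewrite inE coord_mx_sub.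
Qed.

End RowSpaceCounting.

Theorem theorem1 (F : finFieldType) (q n k r x : nat) :
  q = #|F| -> (x <= r)%N -> (r <= minn n k)%N ->
  probX F n k r x =
    ('C(k, x)%:R / qbinom q k r) *
    \sum_(j < (k - x).+1)
      (-1) ^+ j * 'C(k - x, j)%:R
        * qbinom q ((k - x)%:Z - j%:Z) (r%:Z - x%:Z - j%:Z).
Proof.
move=> -> _ rnk; rewrite /probX card_rank_unitRowSet mulr_suml.
under eq_bigr do rewrite -[_ * _ / _]mulrA card_supmx_of_rank_ratio ?row_free_coord_mx //.
rewrite (eq_bigl (fun T : {set 'I_k} => T \subset setT)) => [|T]; last by rewrite subsetT.
rewrite (sum_subset_card setT (fun t => (-1) ^+ (t - x) * 'C(t, x)%:R *
  (qbinom #|F| (k - t)%:Z (r%:Z - t%:Z) / qbinom #|F| k r))) cardsT card_ord.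
under eq_bigr do rewrite mulrA.
rewrite (sum_bin_mul_bin k x (fun t => qbinom #|F| (k - t)%:Z (r%:Z - t%:Z) / qbinom #|F| k r)).
rewrite -mulrA; congr (_ * _); rewrite mulr_sumr; apply: eq_bigr => j _.
have jk : (j <= k - x)%N by rewrite -ltnS.
have -> : (k - x)%:Z - j%:Z = (k - (x + j))%:Z by rewrite subzn // subnDA.
have -> : r%:Z - x%:Z - j%:Z = r%:Z - (x + j)%:Z by rewrite PoszD opprD addrA.
by rewrite mulrA mulrC.
Qed.
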